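(* Let $X\colon\mathbf{CommRing}\to\mathbf{Set}$ be a functor that preserves products. Then the zeta species $Z_X$ is isomorphic to the Euler product \[ Z_X\cong {\prod_{p\in\mathbb{P}}}^D Z_{X,p}, \] where $\mathbb{P}$ is the set of primes and, for each prime $p$, $Z_{X,p}$ is the species such that a $Z_{X,p}$-structure on a finite set is a way to make that set into a ring $k_p$ that is a (finite) product of finite fields of characteristic $p$, together with an element of $X(k_p)$.
   Context: A species is a functor from the groupoid of finite sets and bijections to $\mathbf{Set}$; a Dirichlet species is one whose value on $\emptyset$ is $\emptyset$. The zeta species $Z_X$ is the species with $Z_X(S)$ the set of pairs (a way to make $S$ into a semisimple commutative ring $k$, an element of $X(k)$), with bijections acting by transport of structure. (The one-element ring counts as an empty product of fields.) Dirichlet product: a cartesian decomposition of a finite set $S$ is an ordered pair $(\pi_1,\pi_2)$ of equivalence relations on $S$ such that each $\pi_1$-class meets each $\pi_2$-class in exactly one element; write $S_i$ for the set of $\pi_i$-classes. For Dirichlet species $F,G$, $(F\cdot_D G)(S)=\coprod_{(\pi_1,\pi_2)}F(S_1)\times G(S_2)$ over cartesian decompositions of $S$. Its unit is $I$, with $I(S)$ a singleton if $|S|=1$ and empty otherwise. Euler product: a Dirichlet species $A$ is $p$-local if $A(S)=\emptyset$ unless $|S|$ is a power of $p$ and $A(S)$ is a singleton when $|S|=1$. Given a $p$-local Dirichlet species $A_p$ for each prime $p$, let $p_i$ be the $i$th prime, $A[k]=A_{p_1}\cdot_D\cdots\cdot_D A_{p_k}$, and $\iota_k\colon A[k]\cong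 A[k]\cdot_D I\to A[k]\cdot_D A_{p_{k+1}}=A[k+1]$ the map induced by the unique morphism $I\to A_{p_{k+1}}$. Then ${\prod_{p\in\mathbb{P}}}^D A_p=\mathrm{colim}_k A[k]$ along the $\iota_k$. *)

From HB Require Import structures.
From mathcomp Require Import all_boot all_order all_algebra.
From Stdlib Require Import Relations ClassicalEpsilon.
Set Implicit Arguments. Unset Strict Implicit. Unset Printing Implicit Defensive.
Import GRing.Theory.

Local Open Scope ring_scope.

Definition is_rhom (R S : comPzRingType) (f : R -> S) : Prop :=
  [/\ forall x y, f (x + y) = f x + f y, forall x y, f (x * y) = f x * f y & f 1 = 1].

Record ring_functor := RingFunctor {
  rf_obj :> comPzRingType -> Type;
  rf_map : forall (R S : comPzRingType) (f : R -> S), is_rhom f -> rf_obj R -> rf_obj S }.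
Arguments rf_map r {R S f} _ _.

Definition is_functor (X : ring_functor) : Prop :=
  (forall (R : comPzRingType) (f : R -> R) (hf : is_rhom f),
      f =1 id -> rf_map X hf =1 id) /\
  (forall (R S T : comPzRingType) (f : R -> S) (g : S -> T) (h : R -> T)
     (hf : is_rhom f) (hg : is_rhom g) (hh : is_rhom h),
      h =1 g \o f -> rf_map X hh =1 rf_map X hg \o rf_map X hf).

Lemma fst_rhom (R1 R2 : comPzRingType) : is_rhom (@fst R1 R2). Proof. by split. Qed.
Lemma snd_rhom (R1 R2 : comPzRingType) : is_rhom (@snd R1 R2). Proof. by split. Qed.

(* X preserves (finite) products: the terminal object (the zero ring, i.e. any
   ring with 1 = 0) goes to a one-point set, and X(R1 x R2) -> X R1 x X R2 given
   by the two projections is a bijection. *)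
Definition preserves_products (X : ring_functor) : Prop :=
  (forall R : comPzRingType, (1 = 0 :> R) -> exists x : X R, forall y : X R, y = x) /\
  (forall R1 R2 : comPzRingType,
     bijective (fun x : X (R1 * R2)%type =>
                  (rf_map X (fst_rhom R1 R2) x, rf_map X (snd_rhom R1 R2) x))).

Record bij (S T : finType) := Bij {
  bij_f :> S -> T; bij_g : T -> S;
  bij_fK : cancel bij_f bij_g; bij_gK : cancel bij_g bij_f }.

Lemma bij_inj (S T : finType) (s : bij S T) : injective s.
Proof. exact: can_inj (bij_fK s). Qed.

Record species := Species {
  sp_obj :> finType -> Type;
  sp_tr : forall S T : finType, bij S T -> sp_obj S -> sp_obj T }.
Arguments sp_tr s {S T} _ _.

Definition species_iso (F G : species) : Prop :=
  exists phi : forall S : finType, F S -> G S,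
    (forall S : finType, bijective (phi S)) /\
    (forall (S T : finType) (s : bij S T) (x : F S),
        phi T (sp_tr F s x) = sp_tr G s (phi S x)).

Record cringStr (S : Type) := CRingStr {
  cr_zero : S; cr_opp : S -> S; cr_add : S -> S -> S; cr_one : S; cr_mul : S -> S -> S;
  cr_addA : associative cr_add; cr_addC : commutative cr_add;
  cr_add0 : left_id cr_zero cr_add; cr_addN : left_inverse cr_zero cr_opp cr_add;
  cr_mulA : associative cr_mul; cr_mulC : commutative cr_mul;
  cr_mul1 : left_id cr_one cr_mul; cr_mulD : left_distributive cr_mul cr_add }.

Definition ringOf (S : finType) (r : cringStr S) : Type := S.
HB.instance Definition _ (S : finType) (r : cringStr S) := Finite.copy (ringOf r) S.
HB.instance Definition _ (S : finType) (r : cringStr S) :=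
  GRing.isZmodule.Build (ringOf r) (cr_addA r) (cr_addC r) (cr_add0 r) (cr_addN r).
HB.instance Definition _ (S : finType) (r : cringStr S) :=
  GRing.Zmodule_isComPzRing.Build (ringOf r) (cr_mulA r) (cr_mulC r) (cr_mul1 r) (cr_mulD r).

Section CrTransport.
Variables (S T : finType) (s : bij S T) (r : cringStr S).
Local Notation g := (bij_g s).

Let add' := fun x y => s (cr_add r (g x) (g y)).
Let mul' := fun x y => s (cr_mul r (g x) (g y)).
Let opp' := fun x => s (cr_opp r (g x)).

Let addA' : associative add'.
Proof. by move=> x y z; rewrite /add' !bij_fK cr_addA. Qed.
Let addC' : commutative add'.
Proof. by move=> x y; rewrite /add' cr_addC. Qed.
Let add0' : left_id (s (cr_zero r)) add'.
Proof. by move=> x; rewrite /add' bij_fK cr_add0 bij_gK. Qed.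
Let addN' : left_inverse (s (cr_zero r)) opp' add'.
Proof. by move=> x; rewrite /add' /opp' bij_fK cr_addN. Qed.
Let mulA' : associative mul'.
Proof. by move=> x y z; rewrite /mul' !bij_fK cr_mulA. Qed.
Let mulC' : commutative mul'.
Proof. by move=> x y; rewrite /mul' cr_mulC. Qed.
Let mul1' : left_id (s (cr_one r)) mul'.
Proof. by move=> x; rewrite /mul' bij_fK cr_mul1 bij_gK. Qed.
Let mulD' : left_distributive mul' add'.
Proof. by move=> x y z; rewrite /mul' /add' !bij_fK cr_mulD. Qed.

Definition cr_tr : cringStr T :=
  CRingStr addA' addC' add0' addN' mulA' mulC' mul1' mulD'.

Lemma cr_tr_rhom : is_rhom (s : ringOf r -> ringOf cr_tr).
Proof.
split.
- move=> x y; apply: (etrans (congr1 s (congr2 (cr_add r)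
     (esym (bij_fK s x)) (esym (bij_fK s y))))); exact: erefl.
- move=> x y; apply: (etrans (congr1 s (congr2 (cr_mul r)
     (esym (bij_fK s x)) (esym (bij_fK s y))))); exact: erefl.
- exact: erefl.
Qed.

Lemma cr_tr_rhom_inv : is_rhom (g : ringOf cr_tr -> ringOf r).
Proof.
split.
- move=> x y; exact: (bij_fK s (cr_add r (g x) (g y))).
- move=> x y; exact: (bij_fK s (cr_mul r (g x) (g y))).
- exact: (bij_fK s (cr_one r)).
Qed.
End CrTransport.

(* For n = 0 this says
   that R has exactly one element (empty product). *)
Definition prod_of (K : Type) (carrier : K -> comPzRingType) (Q : K -> Prop)
    (R : comPzRingType) : Prop :=
  exists (n : nat) (F : 'I_n -> K) (pi : forall i : 'I_n, R -> carrier (F i)),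
    [/\ forall i, Q (F i), forall i, is_rhom (pi i)
      & bijective (fun x : R => fun i : 'I_n => pi i x)].

Definition semisimple_comm (R : comPzRingType) : Prop :=
  prod_of (fun F : fieldType => (F : comPzRingType)) (fun _ => True) R.

Definition prod_finfields_char (p : nat) (R : comPzRingType) : Prop :=
  prod_of (fun F : finFieldType => (F : comPzRingType)) (fun F => p \in [pchar F]) R.

Lemma prod_of_iso (K : Type) (carrier : K -> comPzRingType) (Q : K -> Prop)
    (R R' : comPzRingType) (g : R' -> R) :
  is_rhom g -> bijective g -> prod_of carrier Q R -> prod_of carrier Q R'.
Proof.
move=> [gD gM g1] gb [n [F [pi [hQ hpi hb]]]].
exists n, F, (fun i => pi i \o g); split => // [i|].
- have [pD pM p1] := hpi i; split => /=.
  + by move=> x y; rewrite gD pD.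
  + by move=> x y; rewrite gM pM.
  + by rewrite g1 p1.
- exact: (bij_comp hb gb).
Qed.

Lemma prod_of_tr (K : Type) (carrier : K -> comPzRingType) (Q : K -> Prop)
   (S T : finType) (s : bij S T) (r : cringStr S) :
  prod_of carrier Q (ringOf r) -> prod_of carrier Q (ringOf (cr_tr s r)).
Proof.
apply: prod_of_iso (cr_tr_rhom_inv s r) _.
by exists (bij_f s) => x; [exact: (bij_gK s x) | exact: (bij_fK s x)].
Qed.

Section Zeta.
Variables (P : comPzRingType -> Prop)
  (HP : forall (S T : finType) (s : bij S T) (r : cringStr S),
          P (ringOf r) -> P (ringOf (cr_tr s r)))
  (X : ring_functor).

Definition Zobj (S : finType) : Type :=
  {r : {r : cringStr S | P (ringOf r)} & X (ringOf (sval r))}.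

Definition Ztr (S T : finType) (s : bij S T) (z : Zobj S) : Zobj T :=
  existT (fun r : {r : cringStr T | P (ringOf r)} => X (ringOf (sval r)))
    (exist _ (cr_tr s (sval (projT1 z))) (HP s (proj2_sig (projT1 z))))
    (rf_map X (cr_tr_rhom s (sval (projT1 z))) (projT2 z)).

Definition Zspecies : species := Species Ztr.
End Zeta.

Definition zeta_species (X : ring_functor) : species :=
  @Zspecies semisimple_comm
    (@prod_of_tr fieldType (fun F : fieldType => (F : comPzRingType)) (fun _ => True)) X.

Definition zeta_species_p (X : ring_functor) (p : nat) : species :=
  @Zspecies (prod_finfields_char p)
    (@prod_of_tr finFieldType (fun F : finFieldType => (F : comPzRingType))
       (fun F : finFieldType => p \in [pchar F])) X.

Lemma zeta_species_p_pos (X : ring_functor) (p : nat) (S : finType) :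
  zeta_species_p X p S -> (0 < #|S|)%N.
Proof. by case=> [[r _] _]; apply/card_gt0P; exists (cr_zero r). Qed.

Local Close Scope ring_scope.

Definition equivb (S : finType) (e : {set S * S}) : bool :=
  [&& [forall x, (x, x) \in e],
      [forall x, forall y, ((x, y) \in e) ==> ((y, x) \in e)]
    & [forall x, forall y, forall z,
         ((x, y) \in e) ==> ((y, z) \in e) ==> ((x, z) \in e)]].

Definition classes (S : finType) (e : {set S * S}) : {set {set S}} :=
  [set [set y | (x, y) \in e] | x : S].

Definition blocks (S : finType) (e : {set S * S}) : finType :=
  {A : {set S} | A \in classes e}.

Definition cartdec (S : finType) (d : {set S * S} * {set S * S}) : bool :=
  [&& equivb d.1, equivb d.2 &
      [forall A in classes d.1, forall B in classes d.2, #|A :&: B| == 1]].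

Section Transport.
Variables (S T : finType) (s : bij S T).
Local Notation g := (bij_g s).

Definition rtr (e : {set S * S}) : {set T * T} :=
  [set (s p.1, s p.2) | p in e].

Lemma mem_rtr e a b : ((a, b) \in rtr e) = ((g a, g b) \in e).
Proof.
apply/imsetP/idP => [[[x y] h [-> ->]] | h]; first by rewrite /= !bij_fK.
by exists (g a, g b) => //=; rewrite !bij_gK.
Qed.

Lemma mem_imset_bij (A : {set S}) y : (y \in s @: A) = (g y \in A).
Proof.
apply/imsetP/idP => [[x hx ->] | h]; first by rewrite bij_fK.
by exists (g y); rewrite ?bij_gK.
Qed.

Lemma imset_bijK (A : {set S}) : g @: (s @: A) = A.
Proof.
apply/setP=> x; apply/imsetP/idP => [[y hy ->] | h].
  by move: hy; rewrite mem_imset_bij.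
by exists (s x); rewrite ?bij_fK // imset_f.
Qed.

Lemma imset_bijKV (B : {set T}) : s @: (g @: B) = B.
Proof.
apply/setP=> y; rewrite mem_imset_bij; apply/imsetP/idP => [[x hx /(can_inj (bij_gK s)) ->] //|h].
by exists y.
Qed.

Lemma classes_rtr e : classes (rtr e) = (fun A : {set S} => s @: A) @: classes e.
Proof.
apply/setP=> B; apply/imsetP/imsetP.
- move=> [t _ ->]; exists [set y | (g t, y) \in e]; first by apply/imsetP; exists (g t).
  by apply/setP=> y; rewrite mem_imset_bij !inE mem_rtr.
- move=> [A /imsetP [x _ ->] ->]; exists (s x) => //.
  by apply/setP=> y; rewrite mem_imset_bij !inE mem_rtr bij_fK.
Qed.

Lemma equivb_rtr e : equivb e -> equivb (rtr e).
Proof.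
case/and3P=> /forallP hr /forallP hs /forallP ht; apply/and3P; split.
- by apply/forallP=> x; rewrite mem_rtr.
- apply/forallP=> x; apply/forallP=> y; rewrite !mem_rtr.
  exact: (forallP (hs (g x)) (g y)).
- apply/forallP=> x; apply/forallP=> y; apply/forallP=> z; rewrite !mem_rtr.
  exact: (forallP (forallP (ht (g x)) (g y)) (g z)).
Qed.

Lemma cartdec_rtr (d : {set S * S} * {set S * S}) :
  cartdec d -> cartdec (rtr d.1, rtr d.2).
Proof.
case/and3P=> h1 h2 /forall_inP h3; apply/and3P; split; rewrite ?equivb_rtr //=.
apply/forall_inP=> A; rewrite classes_rtr => /imsetP [A0 hA0 ->].
apply/forall_inP=> B; rewrite classes_rtr => /imsetP [B0 hB0 ->].
rewrite -imsetI; last by move=> x y _ _; apply: bij_inj.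
by rewrite card_imset; [exact: (forall_inP (h3 A0 hA0) B0 hB0) | exact: bij_inj].
Qed.

Lemma bblk_f_proof (e : {set S * S}) (A : blocks e) : s @: sval A \in classes (rtr e).
Proof. by rewrite classes_rtr; apply: imset_f; exact: (proj2_sig A). Qed.

Definition bblk_f (e : {set S * S}) (A : blocks e) : blocks (rtr e) :=
  exist _ (s @: sval A) (bblk_f_proof A).

Lemma bblk_g_proof (e : {set S * S}) (B : blocks (rtr e)) : g @: sval B \in classes e.
Proof.
case: B => B /=; rewrite classes_rtr => /imsetP [A hA ->].
by rewrite imset_bijK.
Qed.

Definition bblk_g (e : {set S * S}) (B : blocks (rtr e)) : blocks e :=
  exist _ (g @: sval B) (bblk_g_proof B).

Definition bblk (e : {set S * S}) : bij (blocks e) (blocks (rtr e)).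
Proof.
refine (@Bij _ _ (@bblk_f e) (@bblk_g e) _ _).
- by move=> A; apply: val_inj; rewrite /= imset_bijK.
- by move=> B; apply: val_inj; rewrite /= imset_bijKV.
Defined.
End Transport.

Section Dirichlet.
Variables F G : species.

Definition dprod_obj (S : finType) : Type :=
  {d : {d : {set S * S} * {set S * S} | cartdec d} &
     (F (blocks (sval d).1) * G (blocks (sval d).2))%type}.

Definition dprod_tr (S T : finType) (s : bij S T) (z : dprod_obj S) : dprod_obj T :=
  let d := sval (projT1 z) in
  existT (fun d : {d : {set T * T} * {set T * T} | cartdec d} =>
            (F (blocks (sval d).1) * G (blocks (sval d).2))%type)
    (exist _ (rtr s d.1, rtr s d.2) (cartdec_rtr s (proj2_sig (projT1 z))))
    (sp_tr F (bblk s d.1) (projT2 z).1, sp_tr G (bblk s d.2) (projT2 z).2).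

Definition dprod : species := Species dprod_tr.
End Dirichlet.

Lemma ex_prime_above (n : nat) : exists p, (n < p) && prime p.
Proof. by case: (prime_above n) => p h1 h2; exists p; rewrite h1 h2. Qed.

Definition next_prime (n : nat) : nat := ex_minn (ex_prime_above n).

Fixpoint nth_prime (k : nat) : nat :=
  if k is k'.+1 then next_prime (nth_prime k') else 2.

Lemma blocks_pos (S : finType) (e : {set S * S}) : 0 < #|blocks e| -> 0 < #|S|.
Proof.
rewrite card_sig => h; apply: (leq_trans h).
by apply: (leq_trans (leq_imset_card _ _)); rewrite cardT.
Qed.

Definition eqrel (S : finType) : {set S * S} := [set p | p.1 == p.2].
Definition fullrel (S : finType) : {set S * S} := [set: S * S].

Lemma cartdec_unit (S : finType) : cartdec (eqrel S, fullrel S).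
Proof.
apply/and3P; split.
- apply/and3P; split.
  + by apply/forallP=> x; rewrite inE.
  + by apply/forallP=> x; apply/forallP=> y; rewrite !inE eq_sym implybb.
  + apply/forallP=> x; apply/forallP=> y; apply/forallP=> z; rewrite !inE /=.
    by apply/implyP=> /eqP ->; rewrite implybb.
- apply/and3P; split.
  + by apply/forallP=> x; rewrite inE.
  + by apply/forallP=> x; apply/forallP=> y; rewrite !inE.
  + by apply/forallP=> x; apply/forallP=> y; apply/forallP=> z; rewrite !inE.
- apply/forall_inP=> A /imsetP [x _ ->]; apply/forall_inP=> B /imsetP [y _ ->].
  have -> : [set z | (x, z) \in eqrel S] :&: [set z | (y, z) \in fullrel S] = [set x].
    by apply/setP=> z; rewrite !inE andbT eq_sym.
  by rewrite cards1.
Qed.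

Definition pt_of (S : finType) (h : 0 < #|S|) : S := xchoose (elimT card_gt0P h).

Section Unitor.
Variables (S : finType) (h : 0 < #|S|).

Lemma class_in (e : {set S * S}) (x : S) : [set y | (x, y) \in e] \in classes e.
Proof. by apply/imsetP; exists x. Qed.

Definition sing_f (x : S) : blocks (eqrel S) :=
  exist _ [set y | (x, y) \in eqrel S] (class_in (eqrel S) x).

Definition sing_g (B : blocks (eqrel S)) : S := odflt (pt_of h) [pick y in sval B].

Lemma sing_fK : cancel sing_f sing_g.
Proof.
move=> x; rewrite /sing_g /=; case: pickP => [y|] /=; first by rewrite !inE /= => /eqP.
by move/(_ x); rewrite !inE eqxx.
Qed.

Lemma sing_gK : cancel sing_g sing_f.
Proof.
case=> B hB; apply: val_inj => /=; rewrite /sing_g /=.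
case/imsetP: (hB) => x _ Bx; rewrite Bx.
case: pickP => [y|] /=; first by rewrite !inE /= => /eqP ->.
by move/(_ x); rewrite !inE eqxx.
Qed.

Definition sing_bij : bij S (blocks (eqrel S)) := Bij sing_fK sing_gK.

Lemma card_blocks_full : #|blocks (fullrel S)| = 1.
Proof.
rewrite card_sig.
have -> : classes (fullrel S) = [set [set: S]].
  apply/setP=> A; rewrite !inE; apply/imsetP/eqP => [[x _ ->]|->].
    by apply/setP=> y; rewrite !inE.
  by exists (pt_of h) => //; apply/setP=> y; rewrite !inE.
exact: cards1.
Qed.
End Unitor.

Section Euler.
(* A p : a p-local Dirichlet species for each prime p;
   u p S : the unique element of A p S when |S| = 1 (i.e. the unique morphism
   I -> A p);  pos : A p S is empty when S is empty. *)
Variables (A : nat -> species)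
  (u : forall (p : nat) (S : finType), #|S| = 1 -> A p S)
  (pos : forall (p : nat) (S : finType), A p S -> 0 < #|S|).

Fixpoint Aseq (k : nat) : species :=
  if k is k'.+1 then dprod (Aseq k') (A (nth_prime k)) else A (nth_prime 0).

Lemma Aseq_pos (k : nat) (S : finType) : Aseq k S -> 0 < #|S|.
Proof.
elim: k S => [|k IH] S /=; first exact: pos.
by case=> d [x _]; apply: blocks_pos (IH _ x).
Qed.

(* iota_k : A[k] ~ A[k] ._D I -> A[k] ._D A_{p_{k+1}} = A[k+1] *)
Definition iota (k : nat) (S : finType) (x : Aseq k S) : Aseq k.+1 S :=
  let h := Aseq_pos x in
  existT (fun d : {d : {set S * S} * {set S * S} | cartdec d} =>
            (Aseq k (blocks (sval d).1) * A (nth_prime k.+1) (blocks (sval d).2))%type)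
    (exist _ (eqrel S, fullrel S) (cartdec_unit S))
    (sp_tr (Aseq k) (sing_bij h) x, u (nth_prime k.+1) (card_blocks_full h)).

(* the sequential colimit colim_k A[k], computed pointwise in Set: the
   quotient of  sum_k A[k](S)  by the equivalence relation generated by
   x ~ iota_k x. *)
Inductive cstep (S : finType) : {k : nat & Aseq k S} -> {k : nat & Aseq k S} -> Prop :=
  | cstep_i (k : nat) (x : Aseq k S) :
      cstep (existT (fun k => Aseq k S) k x) (existT (fun k => Aseq k S) k.+1 (iota x)).

Definition colim_rel (S : finType) := clos_refl_sym_trans _ (@cstep S).

Definition colim_obj (S : finType) : Type :=
  {C : {k : nat & Aseq k S} -> Prop | exists z, C = colim_rel z}.

Definition colim_tr (S T : finType) (s : bij S T) (C : colim_obj S) : colim_obj T :=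
  let z := proj1_sig (constructive_indefinite_description _ (proj2_sig C)) in
  exist _ (colim_rel (existT (fun k => Aseq k T) (projT1 z) (sp_tr (Aseq (projT1 z)) s (projT2 z))))
    (ex_intro _ _ erefl).

Definition euler_product : species := Species colim_tr.
End Euler.

(* A structure of A[k] = Z_{X,2} ._D ... ._D Z_{X,p_k} on S amounts to a chain of
   cartesian decompositions of S with ring structures on the blocks; since
   S ~ S/pi1 x S/pi2 and X preserves products, multiplying them out gives a
   Z_X-structure on S. This map is natural and commutes with the colimit maps.
   It is injective: with p = p_(k+1), p is invertible on the first factor and
   zero on the second, so the decomposition is read off the ring structure as
   pi1 = {p (x - y) = 0} and pi2 = {x - y in pR}. It is surjective: a semisimple
   ring on S is a product of fields whose characteristics are primes at most
   |S|, and the quotients by these two ideals split off the p-primary factors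
   one prime at a time. *)

From Pilot Require Import Defs.
From HB Require Import structures.
From mathcomp Require Import all_boot all_order all_algebra.
From Stdlib Require Import Relations FunctionalExtensionality ProofIrrelevance Eqdep.
From Stdlib Require Import ClassicalEpsilon PropExtensionality.
Set Implicit Arguments. Unset Strict Implicit. Unset Printing Implicit Defensive.
Import GRing.Theory.
Local Open Scope ring_scope.

Lemma rhom_id (R : comPzRingType) : is_rhom (@id R). Proof. by []. Qed.

Lemma rhom_comp (R S T : comPzRingType) (f : R -> S) (g : S -> T) :
  is_rhom f -> is_rhom g -> is_rhom (g \o f).
Proof.
move=> [fD fM f1] [gD gM g1]; split => /= [x y|x y|]; by rewrite ?fD ?gD ?fM ?gM ?f1 ?g1.
Qed.

Section RhomTheory.
Variables (R S : comPzRingType) (f : R -> S) (hf : is_rhom f).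

Lemma rhomD x y : f (x + y) = f x + f y. Proof. by case: hf. Qed.
Lemma rhomM x y : f (x * y) = f x * f y. Proof. by case: hf. Qed.
Lemma rhom1 : f 1 = 1. Proof. by case: hf. Qed.
Lemma rhom0 : f 0 = 0. Proof. by apply: (addrI (f 0)); rewrite -rhomD !addr0. Qed.
Lemma rhomN x : f (- x) = - f x.
Proof. by apply: (addrI (f x)); rewrite -rhomD !subrr rhom0. Qed.
Lemma rhomB x y : f (x - y) = f x - f y. Proof. by rewrite rhomD rhomN. Qed.
Lemma rhom_nat n : f n%:R = n%:R.
Proof. by elim: n => [|n IH]; rewrite ?rhom0 // !mulrS rhomD rhom1 IH. Qed.
End RhomTheory.

Lemma rhom_factor (A B C : comPzRingType) (g : A -> B) (h : A -> C) (f : B -> C) :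
  is_rhom g -> is_rhom h -> (forall b, exists a, g a = b) -> (forall a, f (g a) = h a) ->
  is_rhom f.
Proof.
move=> hg hh g_surj fg; split.
- move=> b b'; case: (g_surj b) => a <-; case: (g_surj b') => a' <-.
  by rewrite -(rhomD hg) !fg (rhomD hh).
- move=> b b'; case: (g_surj b) => a <-; case: (g_surj b') => a' <-.
  by rewrite -(rhomM hg) !fg (rhomM hh).
- by rewrite -(rhom1 hg) fg (rhom1 hh).
Qed.

Lemma rhom_ext (R S : comPzRingType) (f g : R -> S) : f =1 g -> is_rhom f -> is_rhom g.
Proof. by move=> e [fD fM f1]; split=> [x y|x y|]; rewrite -!e. Qed.

Lemma rhom_pairing (R R1 R2 : comPzRingType) (f1 : R -> R1) (f2 : R -> R2) :
  is_rhom f1 -> is_rhom f2 -> is_rhom (fun x => (f1 x, f2 x)).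
Proof.
move=> [aD aM a1] [bD bM b1]; split => /= [x y|x y|]; by rewrite ?aD ?bD ?aM ?bM ?a1 ?b1.
Qed.

Section FunctorTheory.
Variables (X : ring_functor) (HXfun : is_functor X).

Lemma rf_map_id (R : comPzRingType) (f : R -> R) (hf : is_rhom f) x :
  f =1 id -> rf_map X hf x = x.
Proof. by move=> e; apply: HXfun.1. Qed.

Lemma rf_map_comp (R S T : comPzRingType) (f : R -> S) (g : S -> T) (h : R -> T)
  (hf : is_rhom f) (hg : is_rhom g) (hh : is_rhom h) x :
  h =1 g \o f -> rf_map X hh x = rf_map X hg (rf_map X hf x).
Proof. by move=> e; apply: HXfun.2. Qed.

Lemma rf_map_ext (R S : comPzRingType) (f g : R -> S) (hf : is_rhom f) (hg : is_rhom g) x :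
  f =1 g -> rf_map X hf x = rf_map X hg x.
Proof. by move=> e; rewrite (rf_map_comp (rhom_id R) hg hf) ?rf_map_id. Qed.

Lemma rf_map_square (A B C D : comPzRingType) (f : A -> B) (g : B -> D) (f' : A -> C)
  (g' : C -> D) (hf : is_rhom f) (hg : is_rhom g) (hf' : is_rhom f') (hg' : is_rhom g') x :
  g \o f =1 g' \o f' -> rf_map X hg (rf_map X hf x) = rf_map X hg' (rf_map X hf' x).
Proof.
move=> e; rewrite -(rf_map_comp hf hg (rhom_comp hf hg)) //.
rewrite -(rf_map_comp hf' hg' (rhom_comp hf' hg')) //.
exact: rf_map_ext.
Qed.
End FunctorTheory.

Lemma cringStr_eq (S : Type) (r r' : cringStr S) :
  cr_add r =2 cr_add r' -> cr_mul r =2 cr_mul r' -> r = r'.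
Proof.
move=> eA eM.
have e0 : cr_zero r = cr_zero r'.
  by rewrite -[LHS](cr_add0 r' (cr_zero r)) -eA cr_addC cr_add0.
have e1 : cr_one r = cr_one r'.
  by rewrite -[LHS](cr_mul1 r' (cr_one r)) -eM cr_mulC cr_mul1.
have eN : cr_opp r =1 cr_opp r'.
  move=> x; have h : cr_add r x (cr_opp r' x) = cr_zero r.
    by rewrite eA e0 cr_addC cr_addN.
  transitivity (cr_add r (cr_add r (cr_opp r x) x) (cr_opp r' x)).
    by rewrite -cr_addA h cr_addC cr_add0.
  by rewrite cr_addN cr_add0.
have fN := functional_extensionality _ _ eN.
have /functional_extensionality fA : forall x, cr_add r x = cr_add r' x.
  by move=> x; apply: functional_extensionality; apply: eA.
have /functional_extensionality fM : forall x, cr_mul r x = cr_mul r' x.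
  by move=> x; apply: functional_extensionality; apply: eM.
case: r r' e0 e1 fA fM fN {eA eM eN} => z o a n m ? ? ? ? ? ? ? ?.
case=> z' o' a' n' m' ? ? ? ? ? ? ? ? /= ? ? ? ? ?; subst.
by f_equal; apply: proof_irrelevance.
Qed.

Lemma cringStr_eq_rhom (S T : finType) (f : S -> T) (r : cringStr S) (t t' : cringStr T) :
  (forall b, exists a, f a = b) ->
  is_rhom (f : ringOf r -> ringOf t) -> is_rhom (f : ringOf r -> ringOf t') -> t = t'.
Proof.
move=> f_surj hf hf'; apply: cringStr_eq => b b'.
- case: (f_surj b) => a <-; case: (f_surj b') => a' <-.
  exact: etrans (esym (rhomD hf a a')) (rhomD hf' a a').
- case: (f_surj b) => a <-; case: (f_surj b') => a' <-.
  exact: etrans (esym (rhomM hf a a')) (rhomM hf' a a').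
Qed.

Section ProductStructure.
Variables (S1 S2 : finType) (r1 : cringStr S1) (r2 : cringStr S2).
Local Notation add := (fun x y : S1 * S2 => (cr_add r1 x.1 y.1, cr_add r2 x.2 y.2)).
Local Notation mul := (fun x y : S1 * S2 => (cr_mul r1 x.1 y.1, cr_mul r2 x.2 y.2)).
Local Notation zero := (cr_zero r1, cr_zero r2).
Local Notation one := (cr_one r1, cr_one r2).
Local Notation opp := (fun x : S1 * S2 => (cr_opp r1 x.1, cr_opp r2 x.2)).

Let addA : associative add. Proof. by move=> x y z; rewrite /= !cr_addA. Qed.
Let addC : commutative add. Proof. by move=> x y; rewrite /= cr_addC [cr_add r2 _ _]cr_addC. Qed.
Let add0 : left_id zero add. Proof. by case=> ? ?; rewrite /= !cr_add0. Qed.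
Let addN : left_inverse zero opp add. Proof. by move=> x; rewrite /= !cr_addN. Qed.
Let mulA : associative mul. Proof. by move=> x y z; rewrite /= !cr_mulA. Qed.
Let mulC : commutative mul. Proof. by move=> x y; rewrite /= cr_mulC [cr_mul r2 _ _]cr_mulC. Qed.
Let mul1 : left_id one mul. Proof. by case=> ? ?; rewrite /= !cr_mul1. Qed.
Let mulD : left_distributive mul add. Proof. by move=> x y z; rewrite /= !cr_mulD. Qed.

Definition cr_prod : cringStr (S1 * S2)%type := CRingStr addA addC add0 addN mulA mulC mul1 mulD.

Lemma cr_prod_rhom : is_rhom (id : (ringOf r1 * ringOf r2)%type -> ringOf cr_prod).
Proof. by []. Qed.

Lemma cr_prod_rhomV : is_rhom (id : ringOf cr_prod -> (ringOf r1 * ringOf r2)%type).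
Proof. by []. Qed.
End ProductStructure.

Section FamilyProducts.
Variables (K : Type) (C : K -> comPzRingType).

Definition fprod_of (Q : K -> Prop) (R : comPzRingType) : Prop :=
  exists (I : finType) (F : I -> K) (pi : forall i, R -> C (F i)),
    [/\ forall i, Q (F i), forall i, is_rhom (pi i)
      & bijective (fun x : R => fun i : I => pi i x)].

Lemma prod_bijP (R : comPzRingType) (I : Type) (F : I -> K) (pi : forall i, R -> C (F i)) :
  bijective (fun x : R => fun i : I => pi i x) <->
  (forall x y, (forall i, pi i x = pi i y) -> x = y) /\
  (forall h : forall i, C (F i), exists x, forall i, pi i x = h i).
Proof.
split.
- case=> g gK Kg; split.
  + move=> x y e; rewrite -(gK x) -(gK y); congr g.
    exact: functional_extensionality_dep.
  + by move=> h; exists (g h) => i; have /(congr1 (@^~ i)) := Kg h.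
- case=> pi_inj pi_surj.
  pose g h := proj1_sig (constructive_indefinite_description _ (pi_surj h)).
  have gK h i : pi i (g h) = h i.
    by rewrite /g; case: constructive_indefinite_description.
  exists g => [x|h]; first by apply: pi_inj => i; rewrite gK.
  by apply: functional_extensionality_dep => i; rewrite gK.
Qed.

Lemma eq_rect_dfun (I : eqType) (J : Type) (P : I -> Type) (v : J -> I)
  (h : forall j, P (v j)) {j j'} (e1 : j' = j) (e : v j' = v j) :
  eq_rect _ P (h j') _ e = h j.
Proof. by subst j'; rewrite (eq_irrelevance e erefl). Qed.

Lemma prod_ofP Q R : prod_of C Q R <-> fprod_of Q R.
Proof.
split; first by case=> n [F [pi H]]; exists ('I_n : finType), F, pi.
case=> I [F [pi [hQ hpi /prod_bijP [pi_inj pi_surj]]]].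
exists #|I|, (fun j => F (enum_val j)), (fun j => pi (enum_val j)); split => //.
apply/prod_bijP; split=> [x y e|h].
  by apply: pi_inj => i; have := e (enum_rank i); rewrite enum_rankK.
pose h' i := eq_rect _ (fun t => C (F t)) (h (enum_rank i)) i (enum_rankK i).
case: (pi_surj h') => x hx; exists x => j; rewrite hx /h'.
exact: (@eq_rect_dfun I _ (fun t => C (F t)) enum_val h j _ (enum_valK j)).
Qed.

Lemma fprod_of_iso Q (R R' : comPzRingType) (g : R' -> R) :
  is_rhom g -> bijective g -> fprod_of Q R -> fprod_of Q R'.
Proof.
move=> hg g_bij [I [F [pi [hQ hpi pi_bij]]]].
exists I, F, (fun i => pi i \o g); split => // [i|].
- exact: rhom_comp.
- exact: bij_comp pi_bij g_bij.
Qed.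

Lemma fprod_ofW (Q Q' : K -> Prop) R :
  (forall k, Q k -> Q' k) -> fprod_of Q R -> fprod_of Q' R.
Proof. by move=> hQ [I [F [pi [h1 h2 h3]]]]; exists I, F, pi; split => // i; apply: hQ. Qed.

Lemma fprod_of_pair Q (R1 R2 : comPzRingType) :
  fprod_of Q R1 -> fprod_of Q R2 -> fprod_of Q (R1 * R2)%type.
Proof.
case=> I1 [F1 [pi1 [hQ1 hr1 /prod_bijP [inj1 surj1]]]].
case=> I2 [F2 [pi2 [hQ2 hr2 /prod_bijP [inj2 surj2]]]].
pose F (i : I1 + I2) := match i with inl j => F1 j | inr j => F2 j end.
pose pi (i : I1 + I2) : (R1 * R2)%type -> C (F i) :=
  match i with inl j => fun x => pi1 j x.1 | inr j => fun x => pi2 j x.2 end.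
exists (I1 + I2)%type, F, pi; split; first by case.
  case=> j.
  - exact: rhom_comp (fst_rhom R1 R2) (hr1 j).
  - exact: rhom_comp (snd_rhom R1 R2) (hr2 j).
apply/prod_bijP; split=> [[x1 x2] [y1 y2] e|h].
  congr pair; [apply: inj1 => j; exact: e (inl j) | apply: inj2 => j; exact: e (inr j)].
case: (surj1 (fun j => h (inl j))) => x1 hx1; case: (surj2 (fun j => h (inr j))) => x2 hx2.
by exists (x1, x2); case.
Qed.
End FamilyProducts.

Lemma finfields_semisimple p (R : comPzRingType) :
  prod_finfields_char p R -> semisimple_comm R.
Proof. by case=> n [F [pi [_ hr hb]]]; exists n, (fun i => (F i : fieldType)), pi. Qed.

Section ProductPreservation.
Variables (X : ring_functor) (HXfun : is_functor X) (HXprod : preserves_products X).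

Definition xsplit (R1 R2 : comPzRingType) (x : X (R1 * R2)%type) : (X R1 * X R2)%type :=
  (rf_map X (fst_rhom R1 R2) x, rf_map X (snd_rhom R1 R2) x).

Lemma xsplit_bij (R1 R2 : comPzRingType) :
  exists g, cancel (@xsplit R1 R2) g /\ cancel g (@xsplit R1 R2).
Proof. by case: (HXprod.2 R1 R2) => g h1 h2; exists g. Qed.

Definition xpair (R1 R2 : comPzRingType) : (X R1 * X R2)%type -> X (R1 * R2)%type :=
  proj1_sig (constructive_indefinite_description _ (xsplit_bij R1 R2)).

Lemma xsplitK (R1 R2 : comPzRingType) : cancel (@xsplit R1 R2) (@xpair R1 R2).
Proof. by rewrite /xpair; case: constructive_indefinite_description => g []. Qed.

Lemma xpairK (R1 R2 : comPzRingType) : cancel (@xpair R1 R2) (@xsplit R1 R2).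
Proof. by rewrite /xpair; case: constructive_indefinite_description => g []. Qed.

Lemma xpair_rf_map (R R1 R2 : comPzRingType) (f1 : R -> R1) (f2 : R -> R2)
  (hf1 : is_rhom f1) (hf2 : is_rhom f2) x :
  xpair (rf_map X hf1 x, rf_map X hf2 x) = rf_map X (rhom_pairing hf1 hf2) x.
Proof.
apply: (can_inj (@xsplitK R1 R2)); rewrite xpairK /xsplit.
by congr pair; apply: (rf_map_comp HXfun).
Qed.

Lemma X_trivial_eq (R : comPzRingType) : (1 = 0 :> R) -> forall x y : X R, x = y.
Proof. by move=> h x y; case: (HXprod.1 R h) => z hz; rewrite (hz x) (hz y). Qed.
End ProductPreservation.

Section ZetaStructures.
Variables (X : ring_functor) (HXfun : is_functor X).

Definition zeta_mk (S : finType) (r : cringStr S) (P : semisimple_comm (ringOf r))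
  (x : X (ringOf r)) : zeta_species X S :=
  existT (fun r : {r : cringStr S | semisimple_comm (ringOf r)} => X (ringOf (sval r)))
    (exist _ r P) x.

Lemma zeta_mkE (S : finType) (z : zeta_species X S) :
  z = zeta_mk (proj2_sig (projT1 z)) (projT2 z).
Proof. by case: z => [[r P] x]. Qed.

Lemma zeta_mk_tr (S T : finType) (s : bij S T) (r : cringStr S)
  (P : semisimple_comm (ringOf r)) (x : X (ringOf r)) :
  sp_tr (zeta_species X) s (zeta_mk P x) =
  zeta_mk (prod_of_tr s P) (rf_map X (cr_tr_rhom s r) x).
Proof. by []. Qed.

Lemma zeta_mk_inj (S : finType) (r : cringStr S) (P P' : semisimple_comm (ringOf r))
  (x x' : X (ringOf r)) :
  zeta_mk P x = zeta_mk P' x' -> x = x'.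
Proof. by rewrite /zeta_mk (proof_irrelevance _ P P') => h; apply: inj_pair2 h. Qed.

Lemma eq_zeta_mk_rf_map (S : finType) (r r' : cringStr S) (P : semisimple_comm (ringOf r))
  (P' : semisimple_comm (ringOf r')) (A : comPzRingType) (g : A -> ringOf r)
  (h : A -> ringOf r') (hg : is_rhom g) (hh : is_rhom h) (y : X A) :
  (forall b, exists a, g a = b) -> (forall a, g a = h a :> S) ->
  zeta_mk P (rf_map X hg y) = zeta_mk P' (rf_map X hh y).
Proof.
move=> g_surj gh.
have hid : is_rhom (id : ringOf r -> ringOf r') by apply: rhom_factor hg hh g_surj gh.
have er : r = r' by apply: cringStr_eq_rhom (rhom_id _) hid => b; exists b.
subst r'; rewrite (proof_irrelevance _ P P'); congr zeta_mk.
by rewrite (rf_map_comp HXfun hg hid hh) ?rf_map_id.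
Qed.
End ZetaStructures.

Section Classes.
Variables (S : finType) (e : {set S * S}).

Definition cls (x : S) : blocks e := exist _ [set y | (x, y) \in e] (class_in e x).

Lemma mem_cls x y : (y \in sval (cls x)) = ((x, y) \in e).
Proof. by rewrite inE. Qed.

Lemma cls_surj (B : blocks e) : exists x, cls x = B.
Proof. by case: B => B /[dup] /imsetP [x _ ->] hB; exists x; apply: val_inj. Qed.

Hypothesis he : equivb e.

Lemma equivb_refl x : (x, x) \in e.
Proof. by case/and3P: he => /forallP. Qed.

Lemma equivb_sym x y : (x, y) \in e -> (y, x) \in e.
Proof. by case/and3P: he => _ /forallP /(_ x) /forallP /(_ y) /implyP. Qed.

Lemma equivb_trans x y z : (x, y) \in e -> (y, z) \in e -> (x, z) \in e.
Proof.
by case/and3P: he => _ _ /forallP /(_ x) /forallP /(_ y) /forallP /(_ z) /implyP h /h /implyP.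
Qed.

Lemma eq_clsP x y : reflect (cls x = cls y) ((x, y) \in e).
Proof.
apply: (iffP idP) => [exy|/(congr1 (fun B : blocks e => y \in sval B))].
  apply: val_inj; apply/setP => z; rewrite !inE; apply/idP/idP.
  - exact: equivb_trans (equivb_sym exy).
  - exact: equivb_trans exy.
by rewrite !mem_cls equivb_refl => ->.
Qed.

Lemma cls_of_mem (B : blocks e) y : y \in sval B -> B = cls y.
Proof. by case: (cls_surj B) => x <- /[!mem_cls] /eq_clsP. Qed.
End Classes.

Section CartesianDecomposition.
Variables (S : finType) (d : {set S * S} * {set S * S}) (hd : cartdec d).

Lemma cartdec_equiv1 : equivb d.1. Proof. by case/and3P: hd. Qed.
Lemma cartdec_equiv2 : equivb d.2. Proof. by case/and3P: hd. Qed.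

Lemma cartdec_meet (A : blocks d.1) (B : blocks d.2) : #|sval A :&: sval B| = 1%N.
Proof.
case/and3P: hd => _ _ /forall_inP /(_ _ (proj2_sig A)) /forall_inP /(_ _ (proj2_sig B)).
by move/eqP.
Qed.

Definition cpair (x : S) : (blocks d.1 * blocks d.2)%type := (cls d.1 x, cls d.2 x).

Lemma cunpair_ex (AB : (blocks d.1 * blocks d.2)%type) :
  exists x, x \in sval AB.1 :&: sval AB.2.
Proof. by apply/set0Pn; rewrite -card_gt0 cartdec_meet. Qed.

Definition cunpair (AB : (blocks d.1 * blocks d.2)%type) : S := xchoose (cunpair_ex AB).

Lemma cunpair_mem AB : cunpair AB \in sval AB.1 :&: sval AB.2.
Proof. exact: xchooseP. Qed.

Lemma cpairK : cancel cpair cunpair.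
Proof.
move=> x; have /eqP/cards1P [z hz] := cartdec_meet (cls d.1 x) (cls d.2 x).
move: (cunpair_mem (cpair x)); rewrite hz inE => /eqP ->; apply/esym/eqP.
by rewrite -in_set1 -hz inE !mem_cls !equivb_refl ?cartdec_equiv1 ?cartdec_equiv2.
Qed.

Lemma cunpairK : cancel cunpair cpair.
Proof.
case=> A B; move: (cunpair_mem (A, B)); rewrite inE /= => /andP [hA hB].
by rewrite /cpair -(cls_of_mem cartdec_equiv1 hA) -(cls_of_mem cartdec_equiv2 hB).
Qed.

Definition cunpair_bij : bij (blocks d.1 * blocks d.2)%type S := Bij cunpairK cpairK.

Lemma cpair_inj x y : cls d.1 x = cls d.1 y -> cls d.2 x = cls d.2 y -> x = y.
Proof. by move=> e1 e2; rewrite -(cpairK x) -(cpairK y) /cpair e1 e2. Qed.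

Lemma cls1_cunpair AB : cls d.1 (cunpair AB) = AB.1.
Proof. by rewrite -[RHS](congr1 fst (cunpairK AB)). Qed.

Lemma cls2_cunpair AB : cls d.2 (cunpair AB) = AB.2.
Proof. by rewrite -[RHS](congr1 snd (cunpairK AB)). Qed.
End CartesianDecomposition.

Lemma bblk_cls (S T : finType) (s : bij S T) (e : {set S * S}) x :
  bblk s e (cls e x) = cls (rtr s e) (s x).
Proof.
by apply: val_inj; apply/setP => y /=; rewrite mem_imset_bij !inE mem_rtr bij_fK.
Qed.

Section Combination.
Variables (S : finType) (d : {set S * S} * {set S * S}) (hd : cartdec d).

Definition cr_comb (r1 : cringStr (blocks d.1)) (r2 : cringStr (blocks d.2)) : cringStr S :=
  cr_tr (cunpair_bij hd) (cr_prod r1 r2).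

Variables (r1 : cringStr (blocks d.1)) (r2 : cringStr (blocks d.2)).
Local Notation R := (cr_comb r1 r2).

Lemma cr_comb_semisimple :
  semisimple_comm (ringOf r1) -> semisimple_comm (ringOf r2) -> semisimple_comm (ringOf R).
Proof.
move=> /prod_ofP P1 /prod_ofP P2; apply/prod_of_tr/prod_ofP.
apply: fprod_of_iso (cr_prod_rhomV r1 r2) _ (fprod_of_pair P1 P2).
by exists id.
Qed.

Lemma cunpair_rhom : is_rhom (fun a : (ringOf r1 * ringOf r2)%type => cunpair hd a : ringOf R).
Proof.
exact: rhom_comp (cr_prod_rhom r1 r2) (cr_tr_rhom (cunpair_bij hd) (cr_prod r1 r2)).
Qed.

Lemma cls1_rhom : is_rhom (fun w : ringOf R => cls d.1 w : ringOf r1).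
Proof.
exact: rhom_comp (rhom_comp (cr_tr_rhom_inv (cunpair_bij hd) (cr_prod r1 r2))
  (cr_prod_rhomV r1 r2)) (fst_rhom _ _).
Qed.

Lemma cls2_rhom : is_rhom (fun w : ringOf R => cls d.2 w : ringOf r2).
Proof.
exact: rhom_comp (rhom_comp (cr_tr_rhom_inv (cunpair_bij hd) (cr_prod r1 r2))
  (cr_prod_rhomV r1 r2)) (snd_rhom _ _).
Qed.
End Combination.

Section ZetaCombination.
Variables (X : ring_functor) (HXfun : is_functor X) (HXprod : preserves_products X).
Local Notation Z := (zeta_species X).

Definition zeta_comb (S : finType) (d : {set S * S} * {set S * S}) (hd : cartdec d)
  (r1 : cringStr (blocks d.1)) (r2 : cringStr (blocks d.2))
  (P1 : semisimple_comm (ringOf r1)) (P2 : semisimple_comm (ringOf r2))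
  (x1 : X (ringOf r1)) (x2 : X (ringOf r2)) : Z S :=
  zeta_mk (cr_comb_semisimple hd P1 P2)
    (rf_map X (cunpair_rhom hd r1 r2) (xpair HXprod (x1, x2))).

Section Fixed.
Variables (S : finType) (d : {set S * S} * {set S * S}) (hd : cartdec d)
  (r1 : cringStr (blocks d.1)) (r2 : cringStr (blocks d.2))
  (P1 : semisimple_comm (ringOf r1)) (P2 : semisimple_comm (ringOf r2)).

Lemma zeta_comb_cls (r : cringStr S) (P : semisimple_comm (ringOf r)) (x : X (ringOf r))
  (h1 : is_rhom (fun w : ringOf r => cls d.1 w : ringOf r1))
  (h2 : is_rhom (fun w : ringOf r => cls d.2 w : ringOf r2)) :
  zeta_comb hd P1 P2 (rf_map X h1 x) (rf_map X h2 x) = zeta_mk P x.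
Proof.
have h12 := rhom_comp (rhom_pairing h1 h2) (cunpair_rhom hd r1 r2).
rewrite /zeta_comb (xpair_rf_map HXfun) -(rf_map_comp HXfun _ _ h12) //.
rewrite -[in RHS](rf_map_id HXfun (rhom_id _) x) //.
by apply: (eq_zeta_mk_rf_map HXfun) => [b|a]; [exists b|]; apply: (cpairK hd).
Qed.

Lemma zeta_comb_proj1 x1 x2 :
  rf_map X (cls1_rhom hd r1 r2) (rf_map X (cunpair_rhom hd r1 r2) (xpair HXprod (x1, x2))) = x1.
Proof.
rewrite -(rf_map_comp HXfun _ _ (fst_rhom _ _)); first exact: (congr1 fst (xpairK HXprod _)).
by move=> a; rewrite /= cls1_cunpair.
Qed.

Lemma zeta_comb_proj2 x1 x2 :
  rf_map X (cls2_rhom hd r1 r2) (rf_map X (cunpair_rhom hd r1 r2) (xpair HXprod (x1, x2))) = x2.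
Proof.
rewrite -(rf_map_comp HXfun _ _ (snd_rhom _ _)); first exact: (congr1 snd (xpairK HXprod _)).
by move=> a; rewrite /= cls2_cunpair.
Qed.
End Fixed.
End ZetaCombination.

(* The rings ringOf r carry no unitRingType structure, hence this ad hoc notion. *)
Definition natr_unit (R : comPzRingType) (p : nat) := exists u : R, p%:R * u = 1.

Section RingDecomposition.
Variables (S : finType) (d : {set S * S} * {set S * S}) (hd : cartdec d) (R : cringStr S)
  (r1 : cringStr (blocks d.1)) (r2 : cringStr (blocks d.2))
  (h1 : is_rhom (fun w : ringOf R => cls d.1 w : ringOf r1))
  (h2 : is_rhom (fun w : ringOf R => cls d.2 w : ringOf r2)).

Lemma natr_unit_decomp q :
  natr_unit (ringOf r1) q -> natr_unit (ringOf r2) q -> natr_unit (ringOf R) q.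
Proof.
case=> u1 hu1 [u2 hu2]; exists (cunpair hd (u1, u2)); apply: (cpair_inj hd).
- by rewrite (rhomM h1) (rhom_nat h1) (rhom1 h1) cls1_cunpair.
- by rewrite (rhomM h2) (rhom_nat h2) (rhom1 h2) cls2_cunpair.
Qed.

Variables (p : nat) (p_unit : natr_unit (ringOf r1) p) (p_zero : p%:R = 0 :> ringOf r2).

Lemma decomp_rel1 (x y : ringOf R) : ((x, y) \in d.1) = (p%:R * (x - y) == 0).
Proof.
have [u hu] := p_unit.
apply/(eq_clsP (cartdec_equiv1 hd))/eqP => [exy|/(congr1 (fun w : ringOf R => cls d.1 w))].
  apply: (cpair_inj hd).
  - by rewrite (rhomM h1) (rhomB h1) (rhom_nat h1) (rhom0 h1) exy subrr mulr0.
  - by rewrite (rhomM h2) (rhom_nat h2) (rhom0 h2) p_zero mul0r.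
rewrite /= (rhomM h1) (rhomB h1) (rhom_nat h1) (rhom0 h1) => /(congr1 (GRing.mul u)).
by rewrite mulrA [u * _]mulrC hu mul1r mulr0 => /eqP; rewrite subr_eq0 => /eqP.
Qed.

Lemma decomp_rel2 (x y : ringOf R) :
  ((x, y) \in d.2) = [exists w : ringOf R, x - y == p%:R * w].
Proof.
have [u hu] := p_unit.
apply/(eq_clsP (cartdec_equiv2 hd))/existsP => [exy|[w /eqP exy]].
  pose v : ringOf r1 := u * ((cls d.1 x : ringOf r1) - (cls d.1 y : ringOf r1)).
  exists (cunpair hd (v, 0 : ringOf r2)); apply/eqP/(cpair_inj hd).
  - by rewrite (rhomM h1) (rhomB h1) (rhom_nat h1) cls1_cunpair mulrA hu mul1r.
  - by rewrite (rhomM h2) (rhomB h2) (rhom_nat h2) p_zero mul0r /= exy subrr.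
apply: (@subr0_eq (ringOf r2)).
by rewrite -(rhomB h2) exy (rhomM h2) (rhom_nat h2) p_zero mul0r.
Qed.
End RingDecomposition.

Lemma cartdec_rhom_uniq (S : finType) (d d' : {set S * S} * {set S * S}) (hd : cartdec d)
  (hd' : cartdec d') (R : cringStr S) (r1 : cringStr (blocks d.1)) (r2 : cringStr (blocks d.2))
  (r1' : cringStr (blocks d'.1)) (r2' : cringStr (blocks d'.2))
  (h1 : is_rhom (fun w : ringOf R => cls d.1 w : ringOf r1))
  (h2 : is_rhom (fun w : ringOf R => cls d.2 w : ringOf r2))
  (h1' : is_rhom (fun w : ringOf R => cls d'.1 w : ringOf r1'))
  (h2' : is_rhom (fun w : ringOf R => cls d'.2 w : ringOf r2')) (p : nat) :
  natr_unit (ringOf r1) p -> p%:R = 0 :> ringOf r2 ->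
  natr_unit (ringOf r1') p -> p%:R = 0 :> ringOf r2' -> d = d'.
Proof.
move=> u1 z2 u1' z2'; apply: injective_projections; apply/setP => -[x y].
- by rewrite (decomp_rel1 hd h1 h2 u1 z2) (decomp_rel1 hd' h1' h2' u1' z2').
- by rewrite (decomp_rel2 hd h1 h2 u1 z2) (decomp_rel2 hd' h1' h2' u1' z2').
Qed.

Lemma cls_tr_rhom (S T : finType) (s : bij S T) (e : {set S * S}) (R : cringStr S)
  (r : cringStr (blocks e)) :
  is_rhom (fun w : ringOf R => cls e w : ringOf r) ->
  is_rhom (fun w : ringOf (cr_tr s R) => cls (rtr s e) w : ringOf (cr_tr (bblk s e) r)).
Proof.
move=> h; apply: rhom_ext (rhom_comp (rhom_comp (cr_tr_rhom_inv s R) h) (cr_tr_rhom (bblk s e) r)).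
by move=> w; rewrite -[in RHS](bij_gK s w) -bblk_cls.
Qed.

Section ZetaCombinationTheory.
Variables (X : ring_functor) (HXfun : is_functor X) (HXprod : preserves_products X).
Local Notation Z := (zeta_species X).

Lemma zeta_comb_tr (S T : finType) (s : bij S T) (d : {set S * S} * {set S * S})
  (hd : cartdec d) (r1 : cringStr (blocks d.1)) (r2 : cringStr (blocks d.2))
  (P1 : semisimple_comm (ringOf r1)) (P2 : semisimple_comm (ringOf r2))
  (x1 : X (ringOf r1)) (x2 : X (ringOf r2))
  (hd' : cartdec (rtr s d.1, rtr s d.2))
  (P1' : semisimple_comm (ringOf (cr_tr (bblk s d.1) r1)))
  (P2' : semisimple_comm (ringOf (cr_tr (bblk s d.2) r2))) :
  zeta_comb HXprod hd' P1' P2'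
    (rf_map X (cr_tr_rhom (bblk s d.1) r1) x1) (rf_map X (cr_tr_rhom (bblk s d.2) r2) x2)
  = sp_tr Z s (zeta_comb HXprod hd P1 P2 x1 x2).
Proof.
have h1 := cls_tr_rhom s (cls1_rhom hd r1 r2).
have h2 := cls_tr_rhom s (cls2_rhom hd r1 r2).
rewrite [sp_tr _ _ _]zeta_mk_tr -(zeta_comb_cls HXfun HXprod hd' P1' P2' _ _ h1 h2).
congr zeta_comb.
- rewrite -[in LHS](zeta_comb_proj1 HXfun HXprod hd x1 x2).
  by apply: (rf_map_square HXfun) => w; apply: bblk_cls.
- rewrite -[in LHS](zeta_comb_proj2 HXfun HXprod hd x1 x2).
  by apply: (rf_map_square HXfun) => w; apply: bblk_cls.
Qed.

Lemma zeta_comb_unit (S : finType) (h : (0 < #|S|)%N) (r : cringStr S)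
  (P : semisimple_comm (ringOf r)) (x : X (ringOf r)) (ru : cringStr (blocks (fullrel S)))
  (P1 : semisimple_comm (ringOf (cr_tr (sing_bij h) r))) (Pu : semisimple_comm (ringOf ru))
  (xu : X (ringOf ru)) :
  zeta_comb HXprod (cartdec_unit S) P1 Pu (rf_map X (cr_tr_rhom (sing_bij h) r) x) xu
  = zeta_mk P x.
Proof.
have all_eq (a b : blocks (fullrel S)) : a = b.
  by case/fintype1: (card_blocks_full h) => z hz; rewrite (hz a) (hz b).
have hu : is_rhom (fun w : ringOf r => cls (fullrel S) w : ringOf ru) by split=> *; apply: all_eq.
rewrite (X_trivial_eq HXprod (all_eq _ _ : 1 = 0 :> ringOf ru) xu (rf_map X hu x)).
exact: (zeta_comb_cls HXfun HXprod (cartdec_unit S) P1 Pu P x (cr_tr_rhom (sing_bij h) r) hu).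
Qed.
End ZetaCombinationTheory.

Section Primes.
Local Open Scope nat_scope.

Lemma next_primeP n : (n < next_prime n) && prime (next_prime n).
Proof. by rewrite /next_prime; case: ex_minnP. Qed.

Lemma next_prime_min n m : n < m -> prime m -> next_prime n <= m.
Proof. by move=> h1 h2; rewrite /next_prime; case: ex_minnP => p _; apply; rewrite h1 h2. Qed.

Lemma nth_prime_prime k : prime (nth_prime k).
Proof. by case: k => [|k] //=; case/andP: (next_primeP (nth_prime k)). Qed.

Lemma nth_prime_ltS k : nth_prime k < nth_prime k.+1.
Proof. by case/andP: (next_primeP (nth_prime k)). Qed.

Lemma nth_prime_inj : injective nth_prime.
Proof. exact/incn_inj/leq_mono/(homo_ltn ltn_trans nth_prime_ltS). Qed.

Lemma nth_prime_ge k : k.+2 <= nth_prime k.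
Proof. by elim: k => [//|k IH]; apply: leq_trans (nth_prime_ltS k). Qed.

Lemma nth_prime_surj p : prime p -> exists2 j, j < p & nth_prime j = p.
Proof.
move=> pp; suff [j _ <-] : exists2 j, j <= p & nth_prime j = p.
  by exists j => //; apply: leq_trans (leqnSn _) (nth_prime_ge j).
have : p <= nth_prime p by apply: leq_trans (leqW (leqnSn _)) (nth_prime_ge p).
elim: {2 3}p => [|n IH] le_p.
  by exists 0 => //; apply/eqP; rewrite eqn_leq le_p prime_gt1.
case: (leqP p (nth_prime n)) => [/IH [j le_jn <-]|lt_p]; first by exists j; rewrite ?leqW.
by exists n.+1 => //; apply/eqP; rewrite eqn_leq le_p next_prime_min.
Qed.
End Primes.

Lemma prod_finfields_natr0 p (R : comPzRingType) : prod_finfields_char p R -> p%:R = 0 :> R.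
Proof.
case=> n [F [pi [hQ hr /prod_bijP [pi_inj _]]]].
by apply: pi_inj => i; rewrite (rhom_nat (hr i)) (rhom0 (hr i)) (pcharf0 (hQ i)).
Qed.

Lemma prod_finfields_natr_unit p q (R : comPzRingType) :
  prime q -> q != p -> prod_finfields_char p R -> natr_unit R q.
Proof.
move=> q_pr neq_qp [n [F [pi [hQ hr /prod_bijP [pi_inj pi_surj]]]]].
have q_nz i : q%:R != 0 :> F i.
  apply/negP => q0; have : q \in [pchar F i] by rewrite inE q_pr q0.
  by rewrite (pcharf_eq (hQ i)) inE (negbTE neq_qp).
case: (pi_surj (fun i => (q%:R)^-1)) => y hy; exists y.
by apply: pi_inj => i; rewrite (rhomM (hr i)) (rhom_nat (hr i)) (rhom1 (hr i)) hy mulfV ?q_nz.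
Qed.

Section EulerToZeta.
Variables (X : ring_functor) (HXfun : is_functor X) (HXprod : preserves_products X).
Local Notation Zp := (zeta_species_p X).
Local Notation Z := (zeta_species X).

Definition zeta_ring (S : finType) (z : Z S) : cringStr S := sval (projT1 z).

Definition zeta_p_incl (p : nat) (S : finType) (z : Zp p S) : Z S :=
  zeta_mk (finfields_semisimple (proj2_sig (projT1 z))) (projT2 z).

Definition dprod_zeta (F : species) (f : forall S, F S -> Z S) (p : nat) (S : finType)
  (z : dprod F (Zp p) S) : Z S :=
  zeta_comb HXprod (proj2_sig (projT1 z)) (proj2_sig (projT1 (f _ (projT2 z).1)))
    (finfields_semisimple (proj2_sig (projT1 (projT2 z).2)))
    (projT2 (f _ (projT2 z).1)) (projT2 (projT2 z).2).
Arguments dprod_zeta [F] f p [S] z.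

Fixpoint aseq_zeta (k : nat) : forall S, Aseq Zp k S -> Z S :=
  match k as k0 return forall S, Aseq Zp k0 S -> Z S with
  | 0 => @zeta_p_incl (nth_prime 0)
  | k'.+1 => dprod_zeta (@aseq_zeta k') (nth_prime k'.+1)
  end.

Section Step.
Variables (F : species) (f : forall S, F S -> Z S) (p : nat).
Hypothesis f_tr : forall (S T : finType) (s : bij S T) (a : F S),
  f (sp_tr F s a) = sp_tr Z s (f a).

Lemma dprod_zeta_tr (S T : finType) (s : bij S T) (z : dprod F (Zp p) S) :
  dprod_zeta f p (sp_tr (dprod F (Zp p)) s z) = sp_tr Z s (dprod_zeta f p z).
Proof.
case: z => [[d hd] [a b]]; rewrite /dprod_zeta /= f_tr.
by case: (f a) => [[r1 P1] x1]; case: b => [[r2 P2] x2]; apply: zeta_comb_tr.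
Qed.

Lemma dprod_zeta_unit (S : finType) (h : (0 < #|S|)%N) (a : F S) (b : Zp p (blocks (fullrel S))) :
  dprod_zeta f p (existT (fun d : {d : {set S * S} * {set S * S} | cartdec d} =>
            (F (blocks (sval d).1) * Zp p (blocks (sval d).2))%type)
    (exist _ (Defs.eqrel S, fullrel S) (cartdec_unit S)) (sp_tr F (sing_bij h) a, b)) = f a.
Proof.
rewrite /dprod_zeta /= f_tr.
by case: (f a) b => [[r P] x] [[ru Pu] xu]; apply: zeta_comb_unit.
Qed.

Lemma dprod_zeta_natr_unit q : prime q -> q != p ->
  (forall S (a : F S), natr_unit (ringOf (zeta_ring (f a))) q) ->
  forall S (z : dprod F (Zp p) S), natr_unit (ringOf (zeta_ring (dprod_zeta f p z))) q.
Proof.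
move=> q_pr neq_qp f_unit S [[d hd] [a b]]; rewrite /dprod_zeta /zeta_ring /=.
move: (f_unit _ a); rewrite /zeta_ring; case: (f a) => [[r1 P1] x1] /= u1.
case: b => [[r2 P2] x2] /=.
apply: (natr_unit_decomp hd (cls1_rhom hd r1 r2) (cls2_rhom hd r1 r2) u1).
exact: prod_finfields_natr_unit q_pr neq_qp P2.
Qed.

(* The common ring structure determines d (cartdec_rhom_uniq), then r1 and r2
   (cringStr_eq_rhom), then x1 and x2 (zeta_comb_proj1/2). *)
Lemma dprod_zeta_inj : (forall S, injective (@f S)) ->
  (forall S (a : F S), natr_unit (ringOf (zeta_ring (f a))) p) ->
  forall S, injective (@dprod_zeta F f p S).
Proof.
move=> f_inj f_unit S [[d hd] [a b]] [[d' hd'] [a' b']]; rewrite /dprod_zeta /=.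
move: (f_unit _ a) (f_unit _ a'); rewrite /zeta_ring.
case Ea: (f a) => [[r1 P1] x1]; case Ea': (f a') => [[r1' P1'] x1'] /= u1 u1'.
case: b b' => [[r2 P2] x2] [[r2' P2'] x2'] /= H.
have eR := congr1 (fun z => sval (projT1 z)) H; rewrite /= in eR.
have h1' := cls1_rhom hd' r1' r2'; have h2' := cls2_rhom hd' r1' r2'.
rewrite -eR in h1' h2'.
have ed := cartdec_rhom_uniq hd hd' (cls1_rhom hd r1 r2) (cls2_rhom hd r1 r2) h1' h2'
  u1 (prod_finfields_natr0 P2) u1' (prod_finfields_natr0 P2').
subst d'; rewrite (eq_irrelevance hd' hd) in H eR h1' h2' *.
have e1 := cringStr_eq_rhom (@cls_surj _ _) (cls1_rhom hd r1 r2) h1'.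
have e2 := cringStr_eq_rhom (@cls_surj _ _) (cls2_rhom hd r1 r2) h2'.
subst r1' r2'; move/zeta_mk_inj: H => H.
have ex1 := congr1 (rf_map X (cls1_rhom hd r1 r2)) H.
have ex2 := congr1 (rf_map X (cls2_rhom hd r1 r2)) H.
rewrite !(zeta_comb_proj1 HXfun) in ex1; rewrite !(zeta_comb_proj2 HXfun) in ex2.
subst x1' x2'; rewrite (proof_irrelevance _ P2' P2).
by have -> : a = a' by apply: f_inj; rewrite Ea Ea' (proof_irrelevance _ P1' P1).
Qed.
End Step.

Lemma aseq_zeta_tr k (S T : finType) (s : bij S T) (a : Aseq Zp k S) :
  aseq_zeta (sp_tr (Aseq Zp k) s a) = sp_tr Z s (aseq_zeta a).
Proof.
elim: k S T s a => [|k IH] S T s a; last exact: (dprod_zeta_tr IH).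
case: a => [[r P] x].
exact: (congr1 (fun Q => zeta_mk Q (rf_map X (cr_tr_rhom s r) x)) (proof_irrelevance _ _ _)).
Qed.

Lemma aseq_zeta_iota (u : forall (p : nat) (S : finType), #|S| = 1%N -> Zp p S) k (S : finType)
  (a : Aseq Zp k S) :
  aseq_zeta (Defs.iota u (@zeta_species_p_pos X) a) = aseq_zeta a.
Proof. exact: (dprod_zeta_unit (aseq_zeta_tr (k := k))). Qed.

Lemma aseq_zeta_natr_unit k (S : finType) (a : Aseq Zp k S) j : (k < j)%N ->
  natr_unit (ringOf (zeta_ring (aseq_zeta a))) (nth_prime j).
Proof.
elim: k S a => [|k IH] S a lt_kj.
  case: a => [[r P] x]; apply: (prod_finfields_natr_unit (nth_prime_prime j) _ P).
  by rewrite (inj_eq nth_prime_inj); case: j lt_kj.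
apply: (dprod_zeta_natr_unit _ _ (fun S a => IH S a (ltnW lt_kj))); first exact: nth_prime_prime.
by rewrite (inj_eq nth_prime_inj) neq_ltn lt_kj orbT.
Qed.

Lemma aseq_zeta_inj k (S : finType) : injective (@aseq_zeta k S).
Proof.
elim: k S => [|k IH] S; last by apply: (dprod_zeta_inj IH) => S' a; apply: aseq_zeta_natr_unit.
move=> [[r P] x] [[r' P'] x'] /= H.
have er : r = r' := congr1 (fun z => sval (projT1 z)) H; subst r'.
have eP : P' = P by apply: proof_irrelevance.
by subst P'; congr existT; apply: zeta_mk_inj H.
Qed.
End EulerToZeta.

Definition is_ideal (R : comPzRingType) (I : pred R) :=
  [/\ I 0, forall x y, I x -> I y -> I (x - y) & forall a x, I x -> I (a * x)].

Section Quotient.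
Variables (S : finType) (r : cringStr S) (I : pred (ringOf r)) (hI : is_ideal I).

Lemma idealB x y : I x -> I y -> I (x - y). Proof. by case: hI => _ hB _; apply: hB. Qed.
Lemma idealM a x : I x -> I (a * x). Proof. by case: hI => _ _ hM; apply: hM. Qed.
Lemma idealN x : I x -> I (- x).
Proof. by move=> Ix; rewrite -sub0r; apply: idealB; case: hI. Qed.
Lemma idealD x y : I x -> I y -> I (x + y).
Proof. by move=> Ix Iy; rewrite -[y]opprK; apply/idealB/idealN. Qed.

Definition ideal_rel : {set S * S} :=
  [set xy : S * S | I ((xy.1 : ringOf r) - (xy.2 : ringOf r))].

Lemma ideal_rel_equiv : equivb ideal_rel.
Proof.
apply/and3P; split.
- by apply/forallP => x; rewrite inE /= subrr; case: hI.
- apply/forallP => x; apply/forallP => y; rewrite !inE /=; apply/implyP => Ixy.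
  by rewrite -opprB; apply: idealN.
- apply/forallP => x; apply/forallP => y; apply/forallP => z; rewrite !inE /=.
  apply/implyP => Ixy; apply/implyP => Iyz.
  by rewrite -[x](subrK (y : ringOf r)) -addrA; apply: idealD.
Qed.

Local Notation q := (cls ideal_rel).

Lemma eq_quot (x y : ringOf r) : (q x = q y) <-> I (x - y).
Proof. by have := eq_clsP ideal_rel_equiv x y; rewrite inE => h; split=> /h. Qed.

Lemma quot_surj (B : blocks ideal_rel) : exists x : ringOf r, q x == B.
Proof. by case: (cls_surj B) => x <-; exists x. Qed.

Definition qrep (B : blocks ideal_rel) : ringOf r := xchoose (quot_surj B).

Lemma qrepK B : q (qrep B) = B.
Proof. exact/eqP/(xchooseP (quot_surj B)). Qed.

Lemma qrep_quot (x : ringOf r) : I (qrep (q x) - x).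
Proof. by apply/eq_quot; rewrite qrepK. Qed.

Let qadd B B' := q (qrep B + qrep B').
Let qmul B B' := q (qrep B * qrep B').
Let qopp B := q (- qrep B).

Let qaddE (x y : ringOf r) : qadd (q x) (q y) = q (x + y).
Proof.
apply/eq_quot; rewrite opprD addrACA; apply: idealD; exact: qrep_quot.
Qed.

Let qmulE (x y : ringOf r) : qmul (q x) (q y) = q (x * y).
Proof.
apply/eq_quot.
have -> : qrep (q x) * qrep (q y) - x * y =
          qrep (q x) * (qrep (q y) - y) + y * (qrep (q x) - x).
  by rewrite !mulrBr [y * qrep _]mulrC addrA subrK [y * x]mulrC.
by apply: idealD; apply/idealM/qrep_quot.
Qed.

Let qoppE (x : ringOf r) : qopp (q x) = q (- x).
Proof. by apply/eq_quot; rewrite -opprD; apply/idealN/qrep_quot. Qed.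

Let qaddA : associative qadd.
Proof.
move=> B1 B2 B3; case: (cls_surj B1) (cls_surj B2) (cls_surj B3) => [x1 <-] [x2 <-] [x3 <-].
by rewrite !qaddE addrA.
Qed.
Let qaddC : commutative qadd.
Proof.
by move=> B1 B2; case: (cls_surj B1) (cls_surj B2) => [x1 <-] [x2 <-]; rewrite !qaddE addrC.
Qed.
Let qadd0 : left_id (q (0 : ringOf r)) qadd.
Proof. by move=> B; case: (cls_surj B) => x <-; rewrite qaddE add0r. Qed.
Let qaddN : left_inverse (q (0 : ringOf r)) qopp qadd.
Proof. by move=> B; case: (cls_surj B) => x <-; rewrite qoppE qaddE addNr. Qed.
Let qmulA : associative qmul.
Proof.
move=> B1 B2 B3; case: (cls_surj B1) (cls_surj B2) (cls_surj B3) => [x1 <-] [x2 <-] [x3 <-].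
by rewrite !qmulE mulrA.
Qed.
Let qmulC : commutative qmul.
Proof.
by move=> B1 B2; case: (cls_surj B1) (cls_surj B2) => [x1 <-] [x2 <-]; rewrite !qmulE mulrC.
Qed.
Let qmul1 : left_id (q (1 : ringOf r)) qmul.
Proof. by move=> B; case: (cls_surj B) => x <-; rewrite qmulE mul1r. Qed.
Let qmulD : left_distributive qmul qadd.
Proof.
move=> B1 B2 B3; case: (cls_surj B1) (cls_surj B2) (cls_surj B3) => [x1 <-] [x2 <-] [x3 <-].
by rewrite qaddE !qmulE qaddE mulrDl.
Qed.

Definition cr_quot : cringStr (blocks ideal_rel) :=
  CRingStr qaddA qaddC qadd0 qaddN qmulA qmulC qmul1 qmulD.

Lemma quot_rhom : is_rhom (fun x : ringOf r => q x : ringOf cr_quot).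
Proof. by split=> [x y|x y|]; rewrite ?qaddE ?qmulE. Qed.
End Quotient.

Definition dfun_upd (I : eqType) (C : I -> Type) (h : forall j, C j) (i : I) (y : C i) :
  forall j, C j :=
  fun j => if i =P j is ReflectT e then eq_rect i C y j e else h j.

Lemma dfun_upd_same (I : eqType) (C : I -> Type) h i y : @dfun_upd I C h i y i = y.
Proof. by rewrite /dfun_upd; case: eqP => // e; rewrite (eq_irrelevance e erefl). Qed.

Lemma prod_proj_surj (R : comPzRingType) (I : finType) (F : I -> fieldType)
  (pi : forall i, R -> F i) :
  bijective (fun x : R => fun i : I => pi i x) -> forall i (y : F i), exists x, pi i x == y.
Proof.
case/prod_bijP => _ pi_surj i y; have [x hx] := pi_surj (dfun_upd (fun j => 0) y).
by exists x; rewrite hx dfun_upd_same.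
Qed.

Section FiniteImageField.
Variables (F : fieldType) (T : finType) (f : T -> F) (f_surj : forall y, exists x, f x == y).

Definition fin_image : Type := F.
HB.instance Definition _ := GRing.Field.copy fin_image F.

Let g (y : fin_image) : T := xchoose (f_surj y).
Let gK : cancel g f. Proof. by move=> y; apply/eqP/(xchooseP (f_surj y)). Qed.
Let pickleK : pcancel (fun y => pickle (g y)) (fun n => omap f (unpickle n)).
Proof. by move=> y; rewrite pickleK /= gK. Qed.
HB.instance Definition _ := Choice_isCountable.Build fin_image pickleK.
HB.instance Definition _ := isFinite.Build fin_image (pcan_enumP (can_pcan gK)).

Definition fin_image_field : finFieldType := fin_image.
End FiniteImageField.

Lemma prod_finfields_of_fields (S : finType) (r : cringStr S) (p : nat) :
  fprod_of (fun F : fieldType => (F : comPzRingType)) (fun F => p \in [pchar F]) (ringOf r) ->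
  prod_finfields_char p (ringOf r).
Proof.
case=> I [F [pi [hQ hr hb]]]; apply/prod_ofP.
by exists I, (fun i => fin_image_field (@prod_proj_surj _ _ _ _ hb i)), pi.
Qed.

Local Notation fprod_fields := (fprod_of (fun F : fieldType => (F : comPzRingType))).

Lemma fprod_of_quot (S : finType) (r : cringStr S) (Id : pred (ringOf r)) (hI : is_ideal Id)
  (I : finType) (F : I -> fieldType) (pi : forall i, ringOf r -> F i)
  (hr : forall i, is_rhom (pi i))
  (pi_surj : forall h : (forall i, F i), exists x, forall i, pi i x = h i)
  (J : pred I) (Q : fieldType -> Prop) (hJ : forall i, J i -> Q (F i))
  (IdE : forall z, Id z <-> (forall i, J i -> pi i z = 0)) :
  fprod_fields Q (ringOf (cr_quot hI)).
Proof.
have pi_qrep i (x : ringOf r) : J i -> pi i (qrep (cls (ideal_rel Id) x)) = pi i x.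
  move=> Ji; apply/eqP; rewrite -subr_eq0 -(rhomB (hr i)); apply/eqP.
  by move/IdE: (qrep_quot hI x) => /(_ i Ji).
have hq := quot_rhom hI.
exists {i | J i}, (fun j => F (val j)), (fun j B => pi (val j) (qrep B)); split.
- by case=> i Ji; apply: hJ.
- case=> i Ji; apply: (rhom_factor hq (hr i)) => [B|x /=]; last exact: pi_qrep.
  by case: (cls_surj B) => x <-; exists x.
apply/prod_bijP; split=> [B B' e|h].
  case: (cls_surj B) (cls_surj B') e => [x <-] [y <-] e; apply/(eq_quot hI)/IdE => i Ji.
  by move: (e (exist _ i Ji)); rewrite /= !pi_qrep // (rhomB (hr i)) => ->; rewrite subrr.
pose h' i : F i := if J i =P true is ReflectT Ji then h (exist _ i Ji) else 0.
case: (pi_surj h') => x hx; exists (cls (ideal_rel Id) x) => -[i Ji] /=.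
rewrite pi_qrep // hx /h'; case: eqP => [Ji'|]; last by rewrite Ji.
by rewrite (bool_irrelevance Ji' Ji).
Qed.

Definition chars_upto (k : nat) (F : fieldType) : Prop :=
  exists2 j, (j <= k)%N & nth_prime j \in [pchar F].

Lemma pchar_le_card (S : finType) (r : cringStr S) (F : fieldType) (f : ringOf r -> F) :
  is_rhom f -> exists2 p, p \in [pchar F] & (p <= #|S|)%N.
Proof.
move=> hf; pose g (m : 'I_#|S|.+1) : S := (m%:R : ringOf r).
have /injectivePn [m1 [m2 neq_m e]] : ~~ injectiveb g.
  by apply/injectiveP => /leq_card; rewrite card_ord ltnn.
wlog lt_m : m1 m2 neq_m e / (m1 < m2)%N.
  move=> W; case: (ltngtP m1 m2) => [||/val_inj/eqP]; [exact: W | | by rewrite (negbTE neq_m)].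
  by apply: W (esym e); rewrite eq_sym.
have m0 : (m2 - m1)%:R == 0 :> F.
  by rewrite -(rhom_nat hf) natrB ?(ltnW lt_m) // /g in e *; rewrite e subrr (rhom0 hf).
have m_pos : (0 < m2 - m1)%N by rewrite subn_gt0.
have [p p_char] := natf0_pchar m_pos m0.
exists p => //; apply: leq_trans (dvdn_leq m_pos _) (leq_trans (leq_subr _ _) _).
  by rewrite (dvdn_pcharf p_char).
by rewrite -ltnS.
Qed.

Lemma semisimple_fields_upto (S : finType) (r : cringStr S) :
  semisimple_comm (ringOf r) -> fprod_fields (chars_upto #|S|) (ringOf r).
Proof.
case/prod_ofP=> I [F [pi [_ hr hb]]]; exists I, F, pi; split => // i.
have [p p_char le_pS] := pchar_le_card (hr i).
have [j lt_jp ejp] := nth_prime_surj (pcharf_prime p_char).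
by exists j; rewrite ?ejp //; apply: leq_trans (ltnW lt_jp) le_pS.
Qed.

Section PrimarySplit.
Variables (S : finType) (r : cringStr S) (p : nat).

Definition p_ann : pred (ringOf r) := fun z => p%:R * z == 0.
Definition p_mult : pred (ringOf r) := fun z => [exists w, z == p%:R * w].

Lemma p_ann_ideal : is_ideal p_ann.
Proof.
split=> [|x y /eqP px /eqP py|a x /eqP px]; apply/eqP; first exact: mulr0.
  by rewrite mulrBr px py subrr.
by rewrite mulrCA px mulr0.
Qed.

Lemma p_mult_ideal : is_ideal p_mult.
Proof.
split=> [|x y /existsP [w /eqP ->] /existsP [w' /eqP ->]|a x /existsP [w /eqP ->]].
- by apply/existsP; exists 0; rewrite mulr0.
- by apply/existsP; exists (w - w'); rewrite mulrBr.
- by apply/existsP; exists (a * w); rewrite mulrCA.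
Qed.

Variables (I : finType) (F : I -> fieldType) (pi : forall i, ringOf r -> F i)
  (hr : forall i, is_rhom (pi i)) (hb : bijective (fun x : ringOf r => fun i => pi i x)).

Let pi_inj : forall x y, (forall i, pi i x = pi i y) -> x = y.
Proof. by case/prod_bijP: hb. Qed.
Let pi_surj : forall h : (forall i, F i), exists x, forall i, pi i x = h i.
Proof. by case/prod_bijP: hb. Qed.

Definition p_coprime (i : I) : bool := p%:R != 0 :> F i.

Lemma p_annE z : p_ann z <-> (forall i, p_coprime i -> pi i z = 0).
Proof.
split=> [/eqP pz i cop_i|h].
  move/(congr1 (pi i)): pz; rewrite (rhomM (hr i)) (rhom_nat (hr i)) (rhom0 (hr i)).
  by move/eqP; rewrite mulf_eq0 (negbTE cop_i) => /eqP.
apply/eqP/pi_inj => i; rewrite (rhomM (hr i)) (rhom_nat (hr i)) (rhom0 (hr i)).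
by case cop_i: (p_coprime i); [rewrite h ?mulr0 | move/negbFE/eqP: cop_i => ->; rewrite mul0r].
Qed.

Lemma p_multE z : p_mult z <-> (forall i, ~~ p_coprime i -> pi i z = 0).
Proof.
split=> [/existsP [w /eqP ->] i /negbNE/eqP p0|h].
  by rewrite (rhomM (hr i)) (rhom_nat (hr i)) p0 mul0r.
case: (pi_surj (fun i => if p_coprime i then pi i z / p%:R else 0)) => w hw.
apply/existsP; exists w; apply/eqP/pi_inj => i.
rewrite (rhomM (hr i)) (rhom_nat (hr i)) hw.
by case cop_i: (p_coprime i); [rewrite mulrC divfK | rewrite mulr0 h ?cop_i].
Qed.

Lemma cartdec_primary : cartdec (ideal_rel p_ann, ideal_rel p_mult).
Proof.
apply/and3P; split; [exact: ideal_rel_equiv p_ann_ideal | exact: ideal_rel_equiv p_mult_ideal |].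
apply/forall_inP => A /imsetP [a _ ->]; apply/forall_inP => B /imsetP [b _ ->].
have [x0 hx0] := pi_surj (fun i => if p_coprime i then pi i a else pi i b).
apply/cards1P; exists x0; apply/setP => y; rewrite !inE /=; apply/andP/eqP.
  case=> /p_annE ay /p_multE b_y; apply: pi_inj => i; rewrite hx0.
  case: ifP => cop_i; apply/esym/eqP; rewrite -subr_eq0 -(rhomB (hr i)); apply/eqP.
    exact: ay.
  by apply: b_y; rewrite cop_i.
move=> ->; split; [apply/p_annE => i cop_i | apply/p_multE => i /negbTE cop_i];
  by rewrite (rhomB (hr i)) hx0 cop_i subrr.
Qed.
End PrimarySplit.

Section Surjectivity.
Variables (X : ring_functor) (HXfun : is_functor X) (HXprod : preserves_products X).
Local Notation Zp := (zeta_species_p X).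
Local Notation Z := (zeta_species X).

Lemma aseq_zeta_surj_upto k (S : finType) (r : cringStr S) (P : semisimple_comm (ringOf r))
  (x : X (ringOf r)) :
  fprod_fields (chars_upto k) (ringOf r) ->
  exists a : Aseq Zp k S, aseq_zeta HXprod a = zeta_mk P x.
Proof.
elim: k S r P x => [|k IH] S r P x [I [F [pi [hQ hr hb]]]].
  have P2 : prod_finfields_char 2 (ringOf r).
    apply: prod_finfields_of_fields; exists I, F, pi; split => // i.
    by case: (hQ i) => j; rewrite leqn0 => /eqP ->.
  exists (existT (fun r0 : {r0 : cringStr S | prod_finfields_char 2 (ringOf r0)} =>
    X (ringOf (sval r0))) (exist _ r P2) x).
  by rewrite /= /zeta_p_incl (proof_irrelevance _ (finfields_semisimple P2) P).
pose p := nth_prime k.+1.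
have [_ pi_surj] := iffLR (prod_bijP _) hb.
have hI1 := p_ann_ideal r p; have hI2 := p_mult_ideal r p.
have Q1 : fprod_fields (chars_upto k) (ringOf (cr_quot hI1)).
  apply: (fprod_of_quot hI1 hr pi_surj (J := p_coprime p F)); last exact: p_annE.
  move=> i cop_i; case: (hQ i) => j; rewrite leq_eqVlt ltnS => /orP [/eqP ->|le_jk] pj.
    by move: cop_i; rewrite /p_coprime (pcharf0 pj) eqxx.
  by exists j.
have Q2 : fprod_fields (fun F => p \in [pchar F]) (ringOf (cr_quot hI2)).
  apply: (fprod_of_quot hI2 hr pi_surj (J := fun i => ~~ p_coprime p F i)); last exact: p_multE.
  by move=> i /negbNE p0; rewrite inE nth_prime_prime.
have P1 : semisimple_comm (ringOf (cr_quot hI1)) by apply/prod_ofP; apply: fprod_ofW Q1.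
have [a1 ea1] := IH _ _ P1 (rf_map X (quot_rhom hI1) x) Q1.
pose b : Zp p (blocks (ideal_rel (p_mult (r := r) p))) :=
  existT (fun r0 : {r0 : cringStr _ | prod_finfields_char p (ringOf r0)} => X (ringOf (sval r0)))
    (exist _ (cr_quot hI2) (prod_finfields_of_fields Q2)) (rf_map X (quot_rhom hI2) x).
exists (existT (fun d : {d : {set S * S} * {set S * S} | cartdec d} =>
            (Aseq Zp k (blocks (sval d).1) * Zp p (blocks (sval d).2))%type)
    (exist _ (_, _) (cartdec_primary p hr hb)) (a1, b)).
rewrite /= /dprod_zeta /= ea1 /=.
exact: zeta_comb_cls.
Qed.

Lemma aseq_zeta_surj (S : finType) (z : Z S) : exists k (a : Aseq Zp k S), aseq_zeta HXprod a = z.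
Proof.
rewrite (zeta_mkE z); exists #|S|; apply: aseq_zeta_surj_upto.
exact: semisimple_fields_upto (proj2_sig (projT1 z)).
Qed.
End Surjectivity.

Lemma inj_surj_bijective (A B : Type) (f : A -> B) :
  injective f -> (forall b, exists a, f a = b) -> bijective f.
Proof.
move=> f_inj f_surj; pose g b := proj1_sig (constructive_indefinite_description _ (f_surj b)).
have gK b : f (g b) = b by rewrite /g; case: constructive_indefinite_description.
by exists g => [a|b]; [apply: f_inj; rewrite gK | apply: gK].
Qed.

Section EulerProduct.
Variables (X : ring_functor) (HXfun : is_functor X) (HXprod : preserves_products X)
  (u : forall (p : nat) (S : finType), #|S| = 1%N -> zeta_species_p X p S).
Local Notation Zp := (zeta_species_p X).
Local Notation Z := (zeta_species X).
Local Notation pos := (@zeta_species_p_pos X).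
Local Notation rel := (colim_rel u pos).

Definition aseq_zeta_sig (S : finType) (w : {k : nat & Aseq Zp k S}) : Z S :=
  aseq_zeta HXprod (projT2 w).

Lemma aseq_zeta_sig_rel (S : finType) (w w' : {k : nat & Aseq Zp k S}) :
  rel w w' -> aseq_zeta_sig w = aseq_zeta_sig w'.
Proof.
elim=> {w w'} [_ _ [k a]|//|_ _ _ ->|_ _ _ _ -> _ ->] //.
exact/esym/(aseq_zeta_iota HXfun).
Qed.

Fixpoint iota_iter (S : finType) (j k : nat) (a : Aseq Zp k S) : Aseq Zp (j + k) S :=
  if j is j'.+1 then Defs.iota u pos (iota_iter j' a) else a.

Lemma aseq_zeta_iota_iter (S : finType) j k (a : Aseq Zp k S) :
  aseq_zeta HXprod (iota_iter j a) = aseq_zeta HXprod a.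
Proof.
by elim: j => [//|j IH]; rewrite -IH; apply: (aseq_zeta_iota HXfun HXprod u (iota_iter j a)).
Qed.

Lemma rel_iota_iter (S : finType) j k (a : Aseq Zp k S) :
  rel (existT _ k a) (existT _ (j + k) (iota_iter j a)).
Proof.
elim: j => [|j IH]; first exact: rst_refl.
by apply: rst_trans IH _; apply: rst_step; apply: cstep_i.
Qed.

Lemma rel_aseq_zeta_sig (S : finType) (w w' : {k : nat & Aseq Zp k S}) :
  aseq_zeta_sig w = aseq_zeta_sig w' -> rel w w'.
Proof.
wlog: w w' / (projT1 w <= projT1 w')%N => [W e|].
  case: (leqP (projT1 w) (projT1 w')) => [le_ww'|lt_w'w]; first exact: W.
  by apply: rst_sym; apply: W (ltnW lt_w'w) (esym e).
case: w w' => k a [m b] /= /subnK em; move: b; rewrite -em /aseq_zeta_sig /= => b e.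
have -> : b = iota_iter (m - k) a by apply: (aseq_zeta_inj HXfun); rewrite aseq_zeta_iota_iter.
exact: rel_iota_iter.
Qed.

Lemma colim_relE (S : finType) (w : {k : nat & Aseq Zp k S}) :
  rel w = (fun w' => aseq_zeta_sig w = aseq_zeta_sig w').
Proof.
apply: functional_extensionality => w'; apply: propositional_extensionality.
by split; [apply: aseq_zeta_sig_rel | apply: rel_aseq_zeta_sig].
Qed.

Lemma zeta_class_ex (S : finType) (z : Z S) :
  exists w, (fun w' => z = aseq_zeta_sig w') = rel w.
Proof.
have [k [a <-]] := aseq_zeta_surj HXfun HXprod z.
by exists (existT _ k a); rewrite colim_relE.
Qed.

(* By colim_relE the colimit classes are the fibres of aseq_zeta_sig. *)
Definition zeta_class (S : finType) (z : Z S) : colim_obj u pos S :=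
  exist _ (fun w => z = aseq_zeta_sig w) (zeta_class_ex z).

Lemma zeta_class_inj (S : finType) : injective (@zeta_class S).
Proof.
move=> z z' /(congr1 sval) /= e; have [k [a ea]] := aseq_zeta_surj HXfun HXprod z.
have := congr1 (fun P => P (existT _ k a)) e; rewrite /aseq_zeta_sig /= ea => h.
by apply/esym; rewrite -h.
Qed.

Lemma zeta_class_surj (S : finType) (c : colim_obj u pos S) : exists z, zeta_class z = c.
Proof.
case: c => C hC; have [w eC] := hC; exists (aseq_zeta_sig w).
by apply: eq_sig_hprop => [? ? ?|/=]; [exact: proof_irrelevance | rewrite eC colim_relE].
Qed.

Lemma zeta_class_tr (S T : finType) (s : bij S T) (z : Z S) :
  zeta_class (sp_tr Z s z) = colim_tr s (zeta_class z).
Proof.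
rewrite /colim_tr; case: constructive_indefinite_description => -[k a] /= e.
apply: eq_sig_hprop => [? ? ?|/=]; first exact: proof_irrelevance.
have -> : z = aseq_zeta_sig (existT _ k a).
  by have /= -> := congr1 (fun C => C (existT _ k a)) e; apply: rst_refl.
by rewrite colim_relE /aseq_zeta_sig /= (aseq_zeta_tr HXfun).
Qed.
End EulerProduct.

Theorem lemma4p4 (X : ring_functor) (HXfun : is_functor X)
    (HXprod : preserves_products X)
    (u : forall (p : nat) (S : finType), #|S| = 1 -> zeta_species_p X p S) :
  species_iso (zeta_species X)
    (@euler_product (zeta_species_p X) u (@zeta_species_p_pos X)).
Proof.
exists (zeta_class HXfun HXprod u); split=> [S|S T s z].
  exact: inj_surj_bijective (@zeta_class_inj _ _ _ _ S) (@zeta_class_surj _ _ _ _ S).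
exact: zeta_class_tr.
Qed.
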